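(* Consider a quantum spin system on the $\nu$-dimensional hypercubic lattice with $N$ sites and a finite-dimensional single-site Hilbert space. For $i=0,\dots,m-1$ let $\hat X_{N(i)}=\sum_j\gamma_j(\hat o_{(i)})$, where $\gamma_j$ is the lattice translation by $j$ and $\hat o_{(i)}$ is an $N$-independent self-adjoint local observable, and let $\hat x_{N(i)}=\hat X_{N(i)}/N$. Let $\check{\boldsymbol X}_N=(\check X_{N(0)},\dots,\check X_{N(m-1)})$ be self-adjoint operators with $\lim_{N\to\infty}\|\hat X_{N(i)}-\check X_{N(i)}\|=0$ and $[\check X_{N(i)},\check X_{N(j)}]=0$ for all $i,j$, and $\check x_{N(i)}=\check X_{N(i)}/N$. Let $\eta$ be an $N$-independent polynomial with real coefficients in $m$ noncommutative indeterminates such that $\eta(\hat{\boldsymbol x}_N)$ is self-adjoint for all $N$. For $\dot{\ }\in\{\hat{\ },\check{\ }\}$ define $\psi_N^{\dot\eta}=-\frac1N\log\mathrm{Tr}[e^{-N\eta(\dot{\boldsymbol x}_N)}]$. If $\psi_N^{\hat\eta}$ and $\psi_N^{\check\eta}$ both converge as $N\to\infty$, then $\lim_{N\to\infty}\psi_N^{\hat\eta}=\lim_{N\to\infty}\psi_N^{\check\eta}$.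
   Context: $\|\cdot\|$ is the operator norm. $\psi_N^{\dot\eta}$ is the (finite-size) thermodynamic function of the squeezed ensemble $e^{-N\eta(\dot{\boldsymbol x}_N)}/\mathrm{Tr}[e^{-N\eta(\dot{\boldsymbol x}_N)}]$. *)

From HB Require Import structures.
From mathcomp Require Import all_boot all_order all_algebra.
From mathcomp Require Import complex.
From mathcomp Require Import all_classical all_reals all_analysis.
Set Implicit Arguments. Unset Strict Implicit. Unset Printing Implicit Defensive.
Import Order.TTheory GRing.Theory Num.Theory numFieldNormedType.Exports.
Local Open Scope classical_set_scope.
Local Open Scope ring_scope.
Local Open Scope complex_scope.

(*   A site of the periodic nu-dimensional hypercubic lattice of side L is   *)
(*   a function 'I_nu -> 'I_L (so N = L ^ nu sites).  A basis configuration  *)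
(*   of the spin system with single-site dimension d is a function           *)
(*   site -> 'I_d; operators on the Hilbert space (C^d)^{(x) N} are square   *)
(*   complex matrices indexed (via enum_rank) by these configurations.       *)
(*   A local observable is an operator on the box {0,..,r-1}^nu.             *)

Definition hdim (nu L d : nat) : nat := #|{ffun {ffun 'I_nu -> 'I_L} -> 'I_d}|.

Definition bdim (nu r d : nat) : nat := #|{ffun {ffun 'I_nu -> 'I_r} -> 'I_d}|.

Section Defs.
Variable R : realType.
Local Notation C := R[i].

Definition adj (n : nat) (A : 'M[C]_n) : 'M[C]_n := \matrix_(i, j) (A j i)^*.
Definition selfadj (n : nat) (A : 'M[C]_n) : Prop := adj A = A.

Definition vnorm2 (n : nat) (v : 'cV[C]_n) : R :=
  \sum_(i < n) complex.Re (v i 0 * (v i 0)^*).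

Definition opnorm (n : nat) (A : 'M[C]_n) : R :=
  sup [set x : R | exists v : 'cV[C]_n,
         vnorm2 v <= 1 /\ x = Num.sqrt (vnorm2 (A *m v))].

Definition mpow (n : nat) (A : 'M[C]_n) (k : nat) : 'M[C]_n :=
  iter k (mulmx A) 1%:M.
Definition expsum (n : nat) (A : 'M[C]_n) (K : nat) : 'M[C]_n :=
  \sum_(k < K) ((k`!)%:R)^-1 *: mpow A k.
Definition mexp (n : nat) (A : 'M[C]_n) : 'M[C]_n :=
  \matrix_(i, j) Complex (limn (fun K => complex.Re (expsum A K i j)))
                         (limn (fun K => complex.Im (expsum A K i j))).

Definition tpos (nu L r : nat) (j : {ffun 'I_nu -> 'I_L.+1})
  (b : {ffun 'I_nu -> 'I_r}) : {ffun 'I_nu -> 'I_L.+1} :=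
  [ffun k => inZp (j k + b k)].

Definition trestr (nu L r d : nat) (j : {ffun 'I_nu -> 'I_L.+1})
  (s : {ffun {ffun 'I_nu -> 'I_L.+1} -> 'I_d}) : {ffun {ffun 'I_nu -> 'I_r} -> 'I_d} :=
  [ffun b => s (tpos j b)].

(* gamma_j(o): the local observable o (acting on the box) translated by j,
   tensored with the identity on the remaining sites *)
Definition transl (nu L r d : nat) (o : 'M[C]_(bdim nu r d))
  (j : {ffun 'I_nu -> 'I_L.+1}) : 'M[C]_(hdim nu L.+1 d) :=
  \matrix_(p, q)
    (let s : {ffun {ffun 'I_nu -> 'I_L.+1} -> 'I_d} := enum_val p in
     let t : {ffun {ffun 'I_nu -> 'I_L.+1} -> 'I_d} := enum_val q in
     if [forall x, (x \notin codom (tpos (r := r) j)) ==> (s x == t x)]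
     then o (enum_rank (trestr r j s)) (enum_rank (trestr r j t))
     else 0).

Definition Xhat (nu L r d : nat) (o : 'M[C]_(bdim nu r d)) : 'M[C]_(hdim nu L.+1 d) :=
  \sum_(j : {ffun 'I_nu -> 'I_L.+1}) transl o j.

Definition Nsites (nu L : nat) : R := ((L.+1) ^ nu)%:R.

(* polynomials with real coefficients in m noncommuting indeterminates:
   finite formal sums of (coefficient, word); a word is a seq of indices *)
Definition ncpoly (m : nat) := seq (R * seq 'I_m).

Definition ncword (m n : nat) (x : 'I_m -> 'M[C]_n) (w : seq 'I_m) : 'M[C]_n :=
  foldr (fun k acc => x k *m acc) 1%:M w.

Definition nceval (m n : nat) (eta : ncpoly m) (x : 'I_m -> 'M[C]_n) : 'M[C]_n :=
  \sum_(t <- eta) (t.1)%:C *: ncword x t.2.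

(* psi = -(1/N) log Tr exp(-N eta(x)) (the trace is real here; we take Re) *)
Definition psiN (n : nat) (N : R) (M : 'M[C]_n) : R :=
  - N^-1 * ln (complex.Re (\tr (mexp (- (N%:C) *: M)))).

End Defs.

From HB Require Import structures.
From mathcomp Require Import all_boot all_order all_algebra.
From mathcomp Require Import complex.
From mathcomp Require Import all_classical all_reals all_analysis.
From mathcomp Require Import ring lra.
Import Order.TTheory GRing.Theory Num.Theory numFieldNormedType.Exports.
Import Normc.
Local Open Scope classical_set_scope.
Local Open Scope ring_scope.
Local Open Scope complex_scope.
Set Implicit Arguments. Unset Strict Implicit. Unset Printing Implicit Defensive.

(* psi_N is 1-Lipschitz for the operator norm on self-adjoint matrices: in
   orthonormal eigenbases of X and Y, every eigenvalue of Y is at most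
   ||Y - X|| plus a convex combination of the eigenvalues of X, so convexity of
   exp gives Tr e^Y <= e^||Y - X|| Tr e^X.  A translate gamma_j(o) has operator
   norm at most ||o||, hence ||hat x_N(i)|| <= ||o(i)||, and check x_N(i) stays
   bounded once hat X_N and check X_N are close.  A noncommutative monomial is
   Lipschitz in bounded factors (telescoping), so ||eta(hat x_N) - eta(check x_N)||
   is at most a constant times sum_i ||hat X_N(i) - check X_N(i)||, which tends
   to 0.  As the check X_N(i) commute, eta(check x_N) is self-adjoint, so the
   difference of the two psi_N tends to 0 and the limits agree. *)

Section ComplexModulus.
Variable R : realType.
Local Notation C := R[i].
Implicit Types x y : C.

Lemma Re_sum (I : Type) (s : seq I) (P : pred I) (F : I -> C) :
  complex.Re (\sum_(i <- s | P i) F i) = \sum_(i <- s | P i) complex.Re (F i).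
Proof.
apply: (big_ind2 (fun z a => complex.Re z = a)) => // z1 a1 z2 a2 <- <-.
by case: z1; case: z2.
Qed.

Lemma Re_mulr_real x (a : R) : complex.Re (x * a%:C) = complex.Re x * a.
Proof. by case: x => u v /=; rewrite mulr0 subr0. Qed.

Lemma normc_ge0 x : 0 <= normc x.
Proof. by case: x => u v; apply: sqrtr_ge0. Qed.

Lemma normc_real (a : R) : normc a%:C = `|a|.
Proof. by rewrite /normc /= expr0n /= addr0 sqrtr_sqr. Qed.

Lemma normc_conj x : normc x^* = normc x.
Proof. by case: x => u v; rewrite /normc /= sqrrN. Qed.

Lemma Re_le_normc x : complex.Re x <= normc x.
Proof.
case: x => u v /=; apply: le_trans (ler_norm u) _.
by rewrite -sqrtr_sqr ler_sqrt ?addr_ge0 ?sqr_ge0 // lerDl sqr_ge0.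
Qed.

Lemma Re_mulrJ x : complex.Re (x * x^*) = normc x ^+ 2.
Proof.
by case: x => u v; rewrite /normc sqr_sqrtr ?addr_ge0 ?sqr_ge0 //=; ring.
Qed.

Lemma Re_conjM_le x y : complex.Re (x^* * y) <= normc x * normc y.
Proof. by rewrite -normc_conj -normcM Re_le_normc. Qed.

End ComplexModulus.

Lemma sqrtr_le_of_sqr (R : realType) (a b : R) :
  0 <= b -> a <= b ^+ 2 -> Num.sqrt a <= b.
Proof. by move=> b0 ab; rewrite -(ger0_norm b0) -sqrtr_sqr ler_wsqrtr. Qed.

Section CauchySchwarz.
Variables (R : realType) (I : finType).
Implicit Types f g : I -> R.

Lemma sqr_sum_mul_le f g :
  (\sum_i f i * g i) ^+ 2 <= (\sum_i f i ^+ 2) * (\sum_i g i ^+ 2).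
Proof.
set A := \sum_i f i ^+ 2; set B := \sum_i g i ^+ 2; set D := \sum_i f i * g i.
have row_sum i : \sum_j (f i * g j - f j * g i) ^+ 2 =
    f i ^+ 2 * B + g i ^+ 2 * A - 2%:R * (f i * g i) * D.
  rewrite !mulr_sumr -big_split -sumrB; apply: eq_bigr => j _ /=; ring.
have : 0 <= \sum_i \sum_j (f i * g j - f j * g i) ^+ 2.
  by apply: sumr_ge0 => i _; apply: sumr_ge0 => j _; apply: sqr_ge0.
rewrite (eq_bigr _ (fun i _ => row_sum i)) sumrB big_split -!mulr_suml -/A -/B.
rewrite -[\sum_i 2%:R * _]mulr_sumr -/D /= [B * A]mulrC; nra.
Qed.

Lemma sum_mul_le_sqrt f g :
  \sum_i f i * g i <= Num.sqrt (\sum_i f i ^+ 2) * Num.sqrt (\sum_i g i ^+ 2).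
Proof.
have [le0|gt0] := lerP (\sum_i f i * g i) 0.
  by apply: le_trans le0 _; rewrite mulr_ge0 ?sqrtr_ge0.
rewrite -sqrtrM ?sumr_ge0 // => [|i _]; last exact: sqr_ge0.
by rewrite -[X in X <= _]gtr0_norm // -sqrtr_sqr ler_wsqrtr // sqr_sum_mul_le.
Qed.

End CauchySchwarz.

Section VectorNorm.
Variables (R : realType) (n : nat).
Local Notation C := R[i].
Implicit Types u v w : 'cV[C]_n.

Definition vnorm v : R := Num.sqrt (vnorm2 v).

Lemma vnorm2E v : vnorm2 v = \sum_i normc (v i 0) ^+ 2.
Proof. by apply: eq_bigr => i _; rewrite Re_mulrJ. Qed.

Lemma vnorm2_ge0 v : 0 <= vnorm2 v.
Proof. by rewrite vnorm2E sumr_ge0 // => i _; apply: sqr_ge0. Qed.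

Lemma vnorm_ge0 v : 0 <= vnorm v.
Proof. exact: sqrtr_ge0. Qed.

Lemma sqr_vnorm v : vnorm v ^+ 2 = vnorm2 v.
Proof. by rewrite sqr_sqrtr // vnorm2_ge0. Qed.

Lemma vnormE v : vnorm v = Num.sqrt (\sum_i normc (v i 0) ^+ 2).
Proof. by rewrite /vnorm vnorm2E. Qed.

Lemma vnorm0 : vnorm 0 = 0.
Proof. by rewrite vnormE big1 ?sqrtr0 // => i _; rewrite mxE normc0 expr0n. Qed.

Lemma vnorm_eq0 v : vnorm v = 0 -> v = 0.
Proof.
move/eqP; rewrite sqrtr_eq0 vnorm2E => le0; apply/matrixP => i j.
rewrite ord1 mxE; apply: eq0_normc; apply/eqP; rewrite -sqrf_eq0 eq_le sqr_ge0 andbT.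
apply: le_trans le0; rewrite (bigD1 i) //= lerDl.
by apply: sumr_ge0 => k _; apply: sqr_ge0.
Qed.

Lemma normc_le_vnorm v i : normc (v i 0) <= vnorm v.
Proof.
rewrite vnormE -(ger0_norm (normc_ge0 _)) -sqrtr_sqr.
rewrite ler_sqrt ?sumr_ge0 // => [|k _]; last exact: sqr_ge0.
by rewrite (bigD1 i) //= lerDl sumr_ge0 // => k _; apply: sqr_ge0.
Qed.

Lemma vnormZ (c : C) v : vnorm (c *: v) = normc c * vnorm v.
Proof.
rewrite !vnormE -(ger0_norm (normc_ge0 c)) -sqrtr_sqr -sqrtrM ?sqr_ge0 //.
by rewrite mulr_sumr; congr Num.sqrt; apply: eq_bigr => i _; rewrite mxE normcM exprMn.
Qed.

Lemma vnormD u w : vnorm (u + w) <= vnorm u + vnorm w.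
Proof.
apply: sqrtr_le_of_sqr; first by rewrite addr_ge0 ?vnorm_ge0.
have sqr_vnormE v : vnorm v ^+ 2 = \sum_i normc (v i 0) ^+ 2 by rewrite sqr_vnorm vnorm2E.
have := sum_mul_le_sqrt (fun i => normc (u i 0)) (fun i => normc (w i 0)).
rewrite -!vnormE => cs.
apply: (@le_trans _ _ (\sum_i (normc (u i 0) + normc (w i 0)) ^+ 2)).
  rewrite vnorm2E; apply: ler_sum => i _; rewrite mxE ler_sqr ?nnegrE ?addr_ge0 ?normc_ge0 //.
  exact: le_normcD.
under eq_bigr do rewrite sqrrD.
by rewrite !big_split /= -!sqr_vnormE sqrrD mulr2n lerD2r lerD2l lerD.
Qed.

End VectorNorm.

Section OperatorNorm.
Variables (R : realType) (n : nat).
Local Notation C := R[i].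
Implicit Types A B : 'M[C]_n.

Lemma normc_sum (I : Type) (s : seq I) (P : pred I) (F : I -> C) :
  normc (\sum_(i <- s | P i) F i) <= \sum_(i <- s | P i) normc (F i).
Proof. exact: (@ler_norm_sum _ (Rcomplex R)). Qed.

Let opnorm_set A := [set x : R | exists v : 'cV[C]_n,
  vnorm2 v <= 1 /\ x = Num.sqrt (vnorm2 (A *m v))].

Lemma opnorm_set0 A : opnorm_set A 0.
Proof.
by exists 0; rewrite -/(vnorm _) mulmx0 vnorm0 -sqr_vnorm vnorm0 expr0n ler01.
Qed.

Lemma opnorm_has_sup A : has_sup (opnorm_set A).
Proof.
split; first by exists 0; apply: opnorm_set0.
exists (Num.sqrt (\sum_i (\sum_j normc (A i j)) ^+ 2)) => _ [v [v1 ->]].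
rewrite -/(vnorm _) vnormE ler_wsqrtr // ler_sum // => i _.
rewrite ler_sqr ?nnegrE ?normc_ge0 ?sumr_ge0 // => [|j _]; last exact: normc_ge0.
rewrite mxE; apply: le_trans (normc_sum _ _ _) _; apply: ler_sum => j _.
rewrite normcM ler_piMr ?normc_ge0 //; apply: le_trans (normc_le_vnorm v j) _.
by rewrite /vnorm -sqrtr1 ler_wsqrtr.
Qed.

Lemma opnorm_ubound A v : vnorm2 v <= 1 -> vnorm (A *m v) <= opnorm A.
Proof. by move=> v1; apply: (sup_upper_bound (opnorm_has_sup A)); exists v. Qed.

Lemma opnorm_le A (K : R) :
  (forall v, vnorm2 v <= 1 -> vnorm (A *m v) <= K) -> opnorm A <= K.
Proof.
move=> AK; apply: ge_sup => [|_ [v [v1 ->]]]; last exact: AK.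
by exists 0; apply: opnorm_set0.
Qed.

Lemma opnorm_ge0 A : 0 <= opnorm A.
Proof. exact: (sup_upper_bound (opnorm_has_sup A) (opnorm_set0 A)). Qed.

Lemma vnorm_mulmx_le A v : vnorm (A *m v) <= opnorm A * vnorm v.
Proof.
have [v0|v_neq0] := eqVneq (vnorm v) 0.
  by rewrite v0 (vnorm_eq0 v0) mulmx0 vnorm0 mulr0.
have v_gt0 : 0 < vnorm v by rewrite lt_neqAle eq_sym v_neq0 vnorm_ge0.
have vinv0 : 0 <= (vnorm v)^-1 by rewrite invr_ge0 ltW.
set w := ((vnorm v)^-1)%:C *: v.
have w1 : vnorm2 w <= 1.
  by rewrite -sqr_vnorm vnormZ normc_real ger0_norm // mulVf // expr1n.
have := opnorm_ubound A w1; rewrite -scalemxAr vnormZ normc_real ger0_norm //.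
by rewrite ler_pdivrMl // mulrC.
Qed.

Lemma opnormD A B : opnorm (A + B) <= opnorm A + opnorm B.
Proof.
apply: opnorm_le => v v1; rewrite mulmxDl; apply: le_trans (vnormD _ _) _.
by apply: lerD; apply: opnorm_ubound.
Qed.

Lemma opnormM A B : opnorm (A *m B) <= opnorm A * opnorm B.
Proof.
apply: opnorm_le => v v1; rewrite -mulmxA; apply: le_trans (vnorm_mulmx_le _ _) _.
by rewrite ler_wpM2l ?opnorm_ge0 ?opnorm_ubound.
Qed.

Lemma opnormZ (c : C) A : opnorm (c *: A) <= normc c * opnorm A.
Proof.
apply: opnorm_le => v v1.
by rewrite -scalemxAl vnormZ ler_wpM2l ?normc_ge0 ?opnorm_ubound.
Qed.

Lemma opnormN A : opnorm (- A) = opnorm A.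
Proof.
have opnormN_le B : opnorm (- B) <= opnorm B.
  by rewrite -scaleN1r (le_trans (opnormZ _ _)) // normcN normc1 mul1r.
by apply/eqP; rewrite eq_le opnormN_le -{1}(opprK A) opnormN_le.
Qed.

Lemma opnorm_distC A B : opnorm (A - B) = opnorm (B - A).
Proof. by rewrite -opnormN opprB. Qed.

Lemma opnorm0 : opnorm (0 : 'M[C]_n) = 0.
Proof.
apply/eqP; rewrite eq_le opnorm_ge0 andbT.
by apply: opnorm_le => v _; rewrite mul0mx vnorm0.
Qed.

Lemma opnorm1 : opnorm (1%:M : 'M[C]_n) <= 1.
Proof. by apply: opnorm_le => v v1; rewrite mul1mx /vnorm -sqrtr1 ler_wsqrtr. Qed.

Lemma opnorm_sum (I : Type) (s : seq I) (P : pred I) (F : I -> 'M[C]_n) :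
  opnorm (\sum_(i <- s | P i) F i) <= \sum_(i <- s | P i) opnorm (F i).
Proof.
apply: (big_ind2 (fun A x => opnorm A <= x)); first by rewrite opnorm0.
  by move=> A1 x1 A2 x2 h1 h2; apply: le_trans (opnormD _ _) (lerD h1 h2).
by [].
Qed.

End OperatorNorm.

Section Adjoint.
Variables (R : realType) (n : nat).
Local Notation C := R[i].
Implicit Types A B : 'M[C]_n.

Lemma adjE A : adj A = map_mx Num.conj A^T.
Proof. by apply/matrixP => i j; rewrite !mxE. Qed.

Lemma adjM A B : adj (A *m B) = adj B *m adj A.
Proof. by rewrite !adjE trmx_mul map_mxM. Qed.

Lemma adjK : involutive (@adj R n).
Proof. by move=> A; apply/matrixP => i j; rewrite !mxE conjcK. Qed.

Lemma selfadjP A : selfadj A <-> forall i j, (A j i)^* = A i j.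
Proof.
rewrite /selfadj; split=> [/matrixP saA i j | saA]; first by rewrite -[RHS]saA mxE.
by apply/matrixP => i j; rewrite mxE saA.
Qed.

Lemma selfadj0 : selfadj (0 : 'M[C]_n).
Proof. by apply/selfadjP => i j; rewrite !mxE conjc0. Qed.

Lemma selfadj1 : selfadj (1%:M : 'M[C]_n).
Proof. by apply/selfadjP => i j; rewrite !mxE eq_sym; case: eqP; rewrite ?conjc1 ?conjc0. Qed.

Lemma selfadjD A B : selfadj A -> selfadj B -> selfadj (A + B).
Proof.
move=> /selfadjP saA /selfadjP saB; apply/selfadjP => i j.
rewrite !mxE -(saA i j) -(saB i j).
by case: (A j i) (B j i) => [a b] [c e] /=; rewrite opprD.
Qed.

Lemma selfadjZ (a : R) A : selfadj A -> selfadj (a%:C *: A).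
Proof.
move=> /selfadjP saA; apply/selfadjP => i j.
rewrite !mxE -(saA i j).
case: (A j i) => [b c]; apply/eqP; rewrite eq_complex /=.
by apply/andP; split; apply/eqP; ring.
Qed.

Lemma selfadjM A B : selfadj A -> selfadj B -> A *m B = B *m A -> selfadj (A *m B).
Proof. by move=> saA saB AB; rewrite /selfadj adjM saA saB. Qed.

End Adjoint.

Section TraceExponential.
Variable R : realType.
Local Notation C := R[i].

Lemma cvg_series_exp_coeff (x : R) : series (exp_coeff x) k @[k --> \oo] --> expR x.
Proof.
rewrite expRE /= (_ : pseries _ x = series (exp_coeff x)); last first.
  by rewrite /pseries exp_coeffE.
exact: is_cvg_series_exp_coeff.
Qed.

Lemma cvg_sumr (I : finType) (u : I -> nat -> R) (l : I -> R) :
  (forall i, u i k @[k --> \oo] --> l i) -> \sum_i u i k @[k --> \oo] --> \sum_i l i.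
Proof.
by move=> ul; apply: cvg_big => //; apply: pseudometric_normed_Zmodule.add_continuous.
Qed.

Variable n : nat.
Implicit Types A P Q : 'M[C]_n.

Lemma mpow_conj P Q A k : P *m Q = 1%:M -> Q *m P = 1%:M ->
  mpow (Q *m A *m P) k = Q *m mpow A k *m P.
Proof.
move=> PQ QP; elim: k => [|k IHk]; first by rewrite /mpow /= mulmx1 QP.
by rewrite /mpow /= -!/(mpow _ k) IHk !mulmxA -[Q *m A *m P *m Q]mulmxA PQ mulmx1.
Qed.

Lemma mpow_diag (d : 'rV[C]_n) k : mpow (diag_mx d) k = diag_mx (\row_j (d 0 j ^+ k)).
Proof.
elim: k => [|k IHk].
  by apply/matrixP => i j; rewrite /mpow /= !mxE expr0.
rewrite /mpow /= -/(mpow _ k) IHk mulmx_diag; congr diag_mx.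
by apply/rowP => j; rewrite !mxE exprS.
Qed.

Lemma Re_expsum_conj_diag P Q (x : 'I_n -> R) K i :
  P *m Q = 1%:M -> Q *m P = 1%:M ->
  complex.Re (expsum (Q *m diag_mx (\row_l (x l)%:C) *m P) K i i) =
  \sum_l complex.Re (Q i l * P l i) * series (exp_coeff (x l)) K.
Proof.
move=> PQ QP; rewrite /expsum summxE Re_sum.
under eq_bigr do rewrite mpow_conj // mpow_diag mul_mx_diag !mxE mulr_sumr Re_sum.
rewrite exchange_big /=; apply: eq_bigr => l _.
rewrite /series /= big_mkord mulr_sumr; apply: eq_bigr => k _.
rewrite !mxE exp_coeffE -rmorphXn /=.
have /= -> : ((k`!)%:R^-1 : C) = ((k`!)%:R^-1 : R)%:C by rewrite fmorphV rmorph_nat.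
rewrite -Re_mulr_real rmorphM /=; congr complex.Re; ring.
Qed.

Lemma Re_tr_mexp_conj_diag P Q (x : 'I_n -> R) :
  P *m Q = 1%:M -> Q *m P = 1%:M ->
  complex.Re (\tr (mexp (Q *m diag_mx (\row_l (x l)%:C) *m P))) = \sum_l expR (x l).
Proof.
move=> PQ QP; rewrite /mxtrace Re_sum.
have entry i : complex.Re (mexp (Q *m diag_mx (\row_l (x l)%:C) *m P) i i) =
    \sum_l complex.Re (Q i l * P l i) * expR (x l).
  rewrite mxE /=; apply: cvg_lim => //.
  under eq_fun do rewrite Re_expsum_conj_diag //.
  by apply: cvg_sumr => l; apply: cvgM; [apply: cvg_cst | apply: cvg_series_exp_coeff].
under eq_bigr do rewrite entry.
rewrite exchange_big /=; apply: eq_bigr => l _.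
have /matrixP /(_ l l) := PQ; rewrite !mxE eqxx /= => PQll.
rewrite -mulr_suml -Re_sum (eq_bigr (fun i => P l i * Q i l)) => [|i _]; last exact: mulrC.
by rewrite PQll mul1r.
Qed.

Lemma selfadj_diagonalization A : selfadj A ->
  exists (P : 'M[C]_n) (x : 'I_n -> R),
  [/\ P *m adj P = 1%:M, adj P *m P = 1%:M & A = adj P *m diag_mx (\row_l (x l)%:C) *m P].
Proof.
move=> saA; have hermA : A \is hermsymmx.
  by rewrite qualifE /= expr0 scale1r -adjE saA.
have PU : spectralmx A *m adj (spectralmx A) = 1%:M.
  by rewrite adjE; apply/unitarymxP; apply: spectral_unitarymx.
exists (spectralmx A), (fun l => complex.Re (spectral_diag A 0 l)); split => //.
  exact: mulmx1C.
have -> : \row_l (complex.Re (spectral_diag A 0 l))%:C = spectral_diag A.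
  apply/rowP => l; rewrite mxE RRe_real //.
  by move/mxOverP: (hermitian_spectral_diag_real hermA) => /(_ 0 l).
rewrite adjE -invmx_unitary ?spectral_unitarymx //.
exact: orthomx_spectralP (hermitian_normalmx hermA).
Qed.

End TraceExponential.

Section TraceExponentialBound.
Variables (R : realType) (n : nat).
Local Notation C := R[i].
Implicit Types A P Q W X Y : 'M[C]_n.

Lemma expR_sum_le_convex (w x : 'I_n -> R) : (forall j, 0 <= w j) -> \sum_j w j = 1 ->
  expR (\sum_j w j * x j) <= \sum_j w j * expR (x j).
Proof.
move=> w0 w1; set c := \sum_j w j * x j.
have tangent j : w j * expR c * (1 + (x j - c)) <= w j * expR (x j).
  rewrite -mulrA ler_wpM2l // -[in leRHS](subrK c (x j)) expRD mulrC ler_wpM2r ?expR_ge0 //.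
  exact: expR_ge1Dx.
apply: le_trans (ler_sum _ (fun j _ => tangent j)).
have -> : \sum_j w j * expR c * (1 + (x j - c)) =
    expR c * (\sum_j w j + \sum_j w j * x j - c * \sum_j w j).
  rewrite [c * _]mulr_sumr -big_split -sumrB [RHS]mulr_sumr.
  by apply: eq_bigr => j _ /=; ring.
by rewrite w1 -/c mulr1 addrK mulr1.
Qed.

Lemma unitary_row_norm W l : W *m adj W = 1%:M -> \sum_j normc (W l j) ^+ 2 = 1.
Proof.
move=> /matrixP /(_ l l); rewrite !mxE eqxx /= => /(congr1 (@complex.Re R)).
by rewrite Re_sum /= => <-; apply: eq_bigr => j _; rewrite !mxE Re_mulrJ.
Qed.

Lemma unitary_col_norm W j : adj W *m W = 1%:M -> \sum_l normc (W l j) ^+ 2 = 1.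
Proof.
move=> /matrixP /(_ j j); rewrite !mxE eqxx /= => /(congr1 (@complex.Re R)).
by rewrite Re_sum /= => <-; apply: eq_bigr => l _; rewrite !mxE mulrC Re_mulrJ.
Qed.

Lemma Re_conj_entry_le_opnorm A P l : P *m adj P = 1%:M ->
  complex.Re ((P *m A *m adj P) l l) <= opnorm A.
Proof.
move=> PU; set u : 'cV[C]_n := col l (adj P).
have u1 : vnorm u = 1.
  rewrite vnormE -[X in _ = X]sqrtr1 -(unitary_row_norm l PU).
  by congr Num.sqrt; apply: eq_bigr => j _; rewrite !mxE normc_conj.
have -> : (P *m A *m adj P) l l = \sum_j (u j 0)^* * (A *m u) j 0.
  rewrite -mulmxA mxE; apply: eq_bigr => j _.
  by rewrite /u !mxE conjCK; congr (_ * _); apply: eq_bigr => k _; rewrite !mxE.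
rewrite Re_sum; apply: le_trans (ler_sum _ (fun j _ => Re_conjM_le _ _)) _.
apply: le_trans (sum_mul_le_sqrt _ _) _; rewrite -!vnormE u1 mul1r.
by apply: le_trans (vnorm_mulmx_le _ _) _; rewrite u1 mulr1.
Qed.

Lemma eigenvalue_le_opnormB X Y P Q (lam mu : 'I_n -> R) l :
  P *m adj P = 1%:M -> X = adj Q *m diag_mx (\row_j (mu j)%:C) *m Q ->
  Y = adj P *m diag_mx (\row_j (lam j)%:C) *m P ->
  lam l <= opnorm (Y - X) + \sum_j normc ((P *m adj Q) l j) ^+ 2 * mu j.
Proof.
move=> PU EX EY; set W := P *m adj Q.
have lam_l : (lam l)%:C = (P *m Y *m adj P) l l.
  by rewrite EY !mulmxA PU mul1mx -mulmxA PU mulmx1 !mxE eqxx mulr1n.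
have splitY : P *m Y *m adj P =
    P *m (Y - X) *m adj P + W *m diag_mx (\row_j (mu j)%:C) *m adj W.
  have -> : W *m diag_mx (\row_j (mu j)%:C) *m adj W = P *m X *m adj P.
    by rewrite /W adjM adjK EX !mulmxA.
  by rewrite -mulmxDl -mulmxDr subrK.
have /(congr1 (@complex.Re R)) /= := lam_l; rewrite splitY mxE => ->.
rewrite raddfD /=; apply: lerD; first exact: Re_conj_entry_le_opnorm.
rewrite mxE Re_sum (eq_bigr (fun j => normc (W l j) ^+ 2 * mu j)) // => j _.
by rewrite mul_mx_diag !mxE mulrAC Re_mulr_real Re_mulrJ.
Qed.

Lemma Re_tr_mexp_le X Y : selfadj X -> selfadj Y ->
  complex.Re (\tr (mexp Y)) <= expR (opnorm (Y - X)) * complex.Re (\tr (mexp X)).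
Proof.
move=> saX saY; set d := opnorm (Y - X).
have [Q [mu [QU UQ EX]]] := selfadj_diagonalization saX.
have [P [lam [PU UP EY]]] := selfadj_diagonalization saY.
set W := P *m adj Q.
have WU : W *m adj W = 1%:M.
  by rewrite /W adjM adjK mulmxA -[P *m adj Q *m Q]mulmxA UQ mulmx1.
have UW : adj W *m W = 1%:M.
  by rewrite /W adjM adjK mulmxA -[Q *m adj P *m P]mulmxA UP mulmx1.
have trY : complex.Re (\tr (mexp Y)) = \sum_l expR (lam l).
  by rewrite [in LHS]EY; apply: Re_tr_mexp_conj_diag; [exact: PU | exact: UP].
have trX : complex.Re (\tr (mexp X)) = \sum_l expR (mu l).
  by rewrite [in LHS]EX; apply: Re_tr_mexp_conj_diag; [exact: QU | exact: UQ].
(* rewriting with trY directly would make Rocq try to unify mexp X with mexp Y *)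
suff : \sum_l expR (lam l) <= expR d * \sum_l expR (mu l) by rewrite -trY -trX.
apply: (@le_trans _ _ (\sum_l expR d * \sum_j normc (W l j) ^+ 2 * expR (mu j))).
  apply: ler_sum => l _.
  apply: (@le_trans _ _ (expR (d + \sum_j normc (W l j) ^+ 2 * mu j))).
    by rewrite ler_expR; apply: eigenvalue_le_opnormB.
  rewrite expRD ler_wpM2l ?expR_ge0 //; apply: expR_sum_le_convex.
    by move=> j; apply: sqr_ge0.
  exact: unitary_row_norm.
rewrite -mulr_sumr exchange_big /= ler_wpM2l ?expR_ge0 //.
by apply: ler_sum => j _; rewrite -mulr_suml unitary_col_norm // mul1r.
Qed.

Lemma Re_tr_mexp_gt0 X : (0 < n)%N -> selfadj X -> 0 < complex.Re (\tr (mexp X)).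
Proof.
move=> n_gt0 saX; have [P [x [PU UP ->]]] := selfadj_diagonalization saX.
rewrite Re_tr_mexp_conj_diag; [|exact: PU|exact: UP].
rewrite (bigD1 (Ordinal n_gt0)) //= ltr_pwDl ?expR_gt0 //.
by apply: sumr_ge0 => i _; apply: expR_ge0.
Qed.

End TraceExponentialBound.

Section PsiLipschitz.
Variable R : realType.
Local Notation C := R[i].

Lemma scaled_ln_sub_le (N d a b : R) : 0 < N -> 0 < a -> 0 < b ->
  b <= expR (N * d) * a -> - N^-1 * ln a - - N^-1 * ln b <= d.
Proof.
move=> N_gt0 a_gt0 b_gt0 ba.
have : ln b <= N * d + ln a.
  rewrite -[X in X + _]expRK -lnM ?posrE ?expR_gt0 //.
  by rewrite ler_ln ?posrE ?mulr_gt0 ?expR_gt0.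
have -> : - N^-1 * ln a - - N^-1 * ln b = (ln b - ln a) / N by ring.
by rewrite ler_pdivrMr // mulrC; lra.
Qed.

Variable n : nat.
Hypothesis n_gt0 : (0 < n)%N.
Implicit Types A B : 'M[C]_n.

Lemma psiN_le_opnormB (N : R) A B : 0 < N -> selfadj A -> selfadj B ->
  psiN N A - psiN N B <= opnorm (A - B).
Proof.
move=> N_gt0 saA saB.
have NC : - N%:C = (- N)%:C :> C by rewrite rmorphN.
have saNA : selfadj (- N%:C *: A) by rewrite NC; apply: selfadjZ.
have saNB : selfadj (- N%:C *: B) by rewrite NC; apply: selfadjZ.
apply: (scaled_ln_sub_le N_gt0 (Re_tr_mexp_gt0 n_gt0 saNA) (Re_tr_mexp_gt0 n_gt0 saNB)).
apply: le_trans (Re_tr_mexp_le saNA saNB) _.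
apply: ler_wpM2r; first exact: ltW (Re_tr_mexp_gt0 n_gt0 saNA).
rewrite ler_expR -scalerBr opnorm_distC.
apply: le_trans (opnormZ _ _) _.
apply: ler_wpM2r; first exact: opnorm_ge0.
rewrite /normc /= (_ : _ + _ = N ^+ 2); last by ring.
by apply: sqrtr_le_of_sqr; [exact: ltW | exact: lexx].
Qed.

Lemma psiN_lipschitz (N : R) A B : 0 < N -> selfadj A -> selfadj B ->
  `|psiN N A - psiN N B| <= opnorm (A - B).
Proof.
move=> N_gt0 saA saB; rewrite ler_norml psiN_le_opnormB // andbT.
by rewrite lerNl opprB opnorm_distC psiN_le_opnormB.
Qed.

End PsiLipschitz.

Lemma sum_enum_rank (V : nmodType) (T : finType) (F : 'I_#|T| -> V) :
  \sum_p F p = \sum_(s : T) F (enum_rank s).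
Proof.
by rewrite (reindex enum_rank) //; exists enum_val => x _; rewrite ?enum_rankK ?enum_valK.
Qed.

Section Translation.
Variable R : realType.
Local Notation C := R[i].
Variables (nu L r d : nat).
Hypothesis r_le : (r <= L.+1)%N.
Local Notation site := {ffun 'I_nu -> 'I_L.+1}.
Local Notation box := {ffun 'I_nu -> 'I_r}.
Local Notation config := {ffun site -> 'I_d}.
Local Notation box_config := {ffun box -> 'I_d}.
Variable j : site.

Lemma tpos_inj : injective (tpos j : box -> site).
Proof.
have lt_L (b : box) k : (b k < L.+1)%N by apply: leq_trans (ltn_ord _) r_le.
move=> b b' /ffunP eq_bb'; apply/ffunP => k; apply: val_inj.
move: (eq_bb' k); rewrite !ffunE => /(congr1 val) /= /eqP.
by rewrite eqn_modDl !modn_small ?lt_L // => /eqP.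
Qed.

Definition outside (s : config) : {ffun site -> option 'I_d} :=
  [ffun x => if x \in codom (tpos j : box -> site) then None else Some (s x)].

Definition glue (a : box_config) (s : config) : config :=
  [ffun x => if [pick b | tpos j b == x] is Some b then a b else s x].

Lemma outside_eqE (s t : config) :
  [forall x, (x \notin codom (tpos (r := r) j)) ==> (s x == t x)] =
  (outside s == outside t).
Proof.
apply/forallP/eqP => [agree | /ffunP eq_st x].
  apply/ffunP => x; rewrite !ffunE; case: ifP => // x_out.
  by move/implyP: (agree x); rewrite x_out => /(_ isT) /eqP ->.
apply/implyP => x_out; move: (eq_st x).
by rewrite !ffunE (negbTE x_out) => -[->].
Qed.

Lemma trestr_glue a s : trestr r j (glue a s) = a.
Proof.
apply/ffunP => b; rewrite !ffunE; case: pickP => [b' /eqP /tpos_inj -> // | none].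
by have := none b; rewrite eqxx.
Qed.

Lemma outside_glue a s : outside (glue a s) = outside s.
Proof.
apply/ffunP => x; rewrite !ffunE; case: ifP => // x_out.
by case: pickP => [b /eqP eq_bx | //]; move: x_out; rewrite -eq_bx codom_f.
Qed.

Lemma glue_trestr (s t : config) : outside s = outside t -> glue (trestr r j s) t = s.
Proof.
move=> /ffunP eq_st; apply/ffunP => x; rewrite !ffunE.
case: pickP => [b /eqP <- | none]; first by rewrite ffunE.
have x_out : x \notin codom (tpos j : box -> site).
  by apply/codomP => -[b eq_xb]; have := none b; rewrite eq_xb eqxx.
by move: (eq_st x); rewrite !ffunE (negbTE x_out) => -[->].
Qed.

Lemma glueK a b s : glue b (glue a s) = glue b s.
Proof. by apply/ffunP => x; rewrite !ffunE; case: pickP. Qed.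

Definition transl_fun (o : 'M[C]_(bdim nu r d)) (s t : config) : C :=
  if outside s == outside t then o (enum_rank (trestr r j s)) (enum_rank (trestr r j t))
  else 0.

Lemma translE (o : 'M[C]_(bdim nu r d)) p q :
  transl o j p q = transl_fun o (enum_val p) (enum_val q).
Proof. by rewrite mxE /= outside_eqE. Qed.

Lemma sum_transl_fun o (V : config -> C) s :
  \sum_t transl_fun o s t * V t =
  \sum_(b : box_config) o (enum_rank (trestr r j s)) (enum_rank b) * V (glue b s).
Proof.
rewrite (bigID (fun t => outside t == outside s)) /= [X in _ + X]big1 ?addr0; last first.
  by move=> t /negbTE out_ts; rewrite /transl_fun eq_sym out_ts mul0r.
rewrite (reindex_onto (fun b => glue b s) (trestr r j)) /=; last first.
  by move=> t /eqP; apply: glue_trestr.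
apply: eq_big => [b | b _]; first by rewrite outside_glue trestr_glue !eqxx.
by rewrite /transl_fun outside_glue trestr_glue eqxx.
Qed.

Lemma box_sum_sq_le (o : 'M[C]_(bdim nu r d)) (w : box_config -> C) :
  \sum_(a : box_config) normc (\sum_(b : box_config) o (enum_rank a) (enum_rank b) * w b) ^+ 2
    <= opnorm o ^+ 2 * \sum_b normc (w b) ^+ 2.
Proof.
set v : 'cV[C]_(bdim nu r d) := \col_q w (enum_val q).
have -> : \sum_b normc (w b) ^+ 2 = vnorm v ^+ 2.
  by rewrite sqr_vnorm vnorm2E sum_enum_rank; apply: eq_bigr => b _; rewrite mxE enum_rankK.
have -> : \sum_(a : box_config) normc (\sum_b o (enum_rank a) (enum_rank b) * w b) ^+ 2 =
    vnorm (o *m v) ^+ 2.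
  rewrite sqr_vnorm vnorm2E sum_enum_rank; apply: eq_bigr => a _; rewrite mxE sum_enum_rank.
  by congr (normc _ ^+ 2); apply: eq_bigr => b _; rewrite mxE enum_rankK.
by rewrite -exprMn ler_sqr ?nnegrE ?mulr_ge0 ?opnorm_ge0 ?vnorm_ge0 ?vnorm_mulmx_le.
Qed.

(* Group the configurations by their restriction outside the box: on each group,
   the translated operator acts as o on the box coordinates. *)
Lemma transl_sum_sq_le o (V : config -> C) :
  \sum_s normc (\sum_t transl_fun o s t * V t) ^+ 2 <= opnorm o ^+ 2 * \sum_s normc (V s) ^+ 2.
Proof.
under eq_bigr do rewrite sum_transl_fun.
rewrite (partition_big outside xpredT) //= [in leRHS](partition_big outside xpredT) //=.
rewrite mulr_sumr; apply: ler_sum => k _.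
case: (pickP (fun s => outside s == k)) => [s0 /eqP <- | none]; last first.
  by rewrite !big_pred0 ?mulr0.
have reindex (F : config -> R) : \sum_(s | outside s == outside s0) F s =
    \sum_(a : box_config) F (glue a s0).
  rewrite (reindex_onto (fun a => glue a s0) (trestr r j)) /=; last first.
    by move=> s /eqP; apply: glue_trestr.
  by apply: eq_bigl => a; rewrite outside_glue trestr_glue !eqxx.
rewrite !reindex; under eq_bigr do rewrite trestr_glue.
under eq_bigr do under eq_bigr do rewrite glueK.
exact: (box_sum_sq_le o (fun b => V (glue b s0))).
Qed.

Lemma opnorm_transl_le (o : 'M[C]_(bdim nu r d)) : opnorm (transl o j) <= opnorm o.
Proof.
apply: opnorm_le => v v1; set V := fun t : config => v (enum_rank t) 0.
apply: sqrtr_le_of_sqr; first exact: opnorm_ge0.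
have -> : vnorm2 (transl o j *m v) = \sum_s normc (\sum_t transl_fun o s t * V t) ^+ 2.
  rewrite vnorm2E sum_enum_rank; apply: eq_bigr => s _; rewrite mxE sum_enum_rank.
  by congr (normc _ ^+ 2); apply: eq_bigr => t _; rewrite translE !enum_rankK.
apply: le_trans (transl_sum_sq_le o V) _.
have -> : \sum_s normc (V s) ^+ 2 = vnorm2 v by rewrite vnorm2E sum_enum_rank.
by rewrite -[leRHS]mulr1 ler_wpM2l ?sqr_ge0.
Qed.

End Translation.

Lemma opnorm_Xhat_le (R : realType) (nu L r d : nat) (o : 'M[R[i]]_(bdim nu r d)) :
  (r <= L.+1)%N -> opnorm (Xhat L o) <= Nsites R nu L * opnorm o.
Proof.
move=> r_le; apply: le_trans (opnorm_sum _ _ _) _.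
apply: le_trans (ler_sum _ (fun j _ => opnorm_transl_le r_le j o)) _.
by rewrite sumr_const /Nsites card_ffun !card_ord mulr_natl.
Qed.

Section NCPolynomial.
Variables (R : realType) (m n : nat).
Local Notation C := R[i].
Implicit Types (a b : 'I_m -> 'M[C]_n) (w : seq 'I_m).

Lemma opnorm_ncword_le a (M : R) w : 0 <= M ->
  (forall i, opnorm (a i) <= M) -> opnorm (ncword a w) <= M ^+ size w.
Proof.
move=> M0 aM; elim: w => [|k w IHw] /=; first by rewrite expr0 opnorm1.
by apply: le_trans (opnormM _ _) _; rewrite exprS ler_pM ?opnorm_ge0.
Qed.

Lemma opnorm_ncwordB_le a b (M e : R) w : 1 <= M ->
  (forall i, opnorm (a i) <= M) -> (forall i, opnorm (b i) <= M) ->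
  (forall i, opnorm (a i - b i) <= e) ->
  opnorm (ncword a w - ncword b w) <= (size w)%:R * M ^+ size w * e.
Proof.
move=> M1 aM bM abe; have M0 : 0 <= M by apply: le_trans M1.
elim: w => [|k w IHw] /=; first by rewrite subrr opnorm0 !mul0r.
have e0 : 0 <= e by apply: le_trans (abe k); apply: opnorm_ge0.
have -> : a k *m ncword a w - b k *m ncword b w =
    (a k - b k) *m ncword a w + b k *m (ncword a w - ncword b w).
  by rewrite mulmxBl mulmxBr addrA subrK.
apply: le_trans (opnormD _ _) _.
apply: le_trans (lerD (opnormM _ _) (opnormM _ _)) _.
apply: le_trans (lerD (ler_pM (opnorm_ge0 _) (opnorm_ge0 _) (abe k)
  (opnorm_ncword_le w M0 aM)) (ler_pM (opnorm_ge0 _) (opnorm_ge0 _) (bM k) IHw)) _.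
rewrite exprS -natr1; set p := M ^+ size w.
have p0 : 0 <= p by apply: exprn_ge0.
rewrite -subr_ge0 (_ : _ - _ = (M - 1) * p * e); last by ring.
by rewrite !mulr_ge0 ?subr_ge0.
Qed.

Lemma opnorm_ncevalB_le (eta : ncpoly R m) a b (M e : R) : 1 <= M ->
  (forall i, opnorm (a i) <= M) -> (forall i, opnorm (b i) <= M) ->
  (forall i, opnorm (a i - b i) <= e) ->
  opnorm (nceval eta a - nceval eta b) <=
    (\sum_(t <- eta) `|t.1| * (size t.2)%:R * M ^+ size t.2) * e.
Proof.
move=> M1 aM bM abe; rewrite /nceval -sumrB mulr_suml.
apply: le_trans (opnorm_sum _ _ _) _; apply: ler_sum => t _.
rewrite -scalerBr; apply: le_trans (opnormZ _ _) _; rewrite normc_real -!mulrA.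
by rewrite ler_wpM2l // mulrA opnorm_ncwordB_le.
Qed.

Section Commuting.
Variable b : 'I_m -> 'M[C]_n.
Hypothesis sa_b : forall i, selfadj (b i).
Hypothesis b_comm : forall i k, b i *m b k = b k *m b i.

Lemma ncword_comm k w : b k *m ncword b w = ncword b w *m b k.
Proof.
elim: w => [|i w IHw] /=; first by rewrite mulmx1 mul1mx.
by rewrite mulmxA b_comm -mulmxA IHw mulmxA.
Qed.

Lemma selfadj_ncword w : selfadj (ncword b w).
Proof.
elim: w => [|k w IHw] /=; first exact: selfadj1.
by apply: selfadjM; rewrite // ncword_comm.
Qed.

Lemma selfadj_nceval (eta : ncpoly R m) : selfadj (nceval eta b).
Proof.
rewrite /nceval; apply: (big_ind (fun M => selfadj M)); [exact: selfadj0 | exact: selfadjD |].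
by move=> t _; apply/selfadjZ/selfadj_ncword.
Qed.

End Commuting.

End NCPolynomial.

Lemma cvg_eq_of_dist_le (R : realType) (u v e : nat -> R) (a b K : R) :
  u k @[k --> \oo] --> a -> v k @[k --> \oo] --> b -> e k @[k --> \oo] --> 0 ->
  (\forall k \near \oo, `|u k - v k| <= K * e k) -> a = b.
Proof.
move=> ua vb e0 uv_le.
have Ke0 : K * e k @[k --> \oo] --> 0.
  by rewrite -(mulr0 K); apply: cvgM; [apply: cvg_cst | apply: e0].
have uv0 : u k - v k @[k --> \oo] --> 0.
  apply: (@squeeze_cvgr _ _ _ _ (fun k => - (K * e k)) (fun k => K * e k)) => //.
    by apply: filterS uv_le => k; rewrite ler_norml.
  by rewrite -oppr0; apply: cvgN.
have : a - b = 0 by apply: (cvg_unique _ (cvgB ua vb) uv0).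
by move/eqP; rewrite subr_eq0 => /eqP.
Qed.

Lemma opnorm_scale_inv_le (R : realType) n (N : R) (A : 'M[R[i]]_n) : 0 < N ->
  opnorm ((N^-1)%:C *: A) <= N^-1 * opnorm A.
Proof.
move=> N_gt0; apply: le_trans (opnormZ _ _) _.
by rewrite normc_real ger0_norm // invr_ge0 ltW.
Qed.

Section HatCheck.
Variables (R : realType) (nu d r m : nat).
Hypothesis d_gt0 : (0 < d)%N.
Variable o : 'I_m -> 'M[R[i]]_(bdim nu r d).
Variable Xc : forall L : nat, 'I_m -> 'M[R[i]]_(hdim nu L.+1 d).
Hypothesis sa_Xc : forall L i, selfadj (Xc L i).
Hypothesis Xc_comm : forall L i k, Xc L i *m Xc L k = Xc L k *m Xc L i.
Variable eta : ncpoly R m.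
Hypothesis sa_eta_hat : forall L : nat, (r <= L.+1)%N ->
  selfadj (nceval eta (fun i => ((Nsites R nu L)^-1)%:C *: Xhat L (o i))).

Let N L := Nsites R nu L.
Let psi_hat L := psiN (N L) (nceval eta (fun i => ((N L)^-1)%:C *: Xhat L (o i))).
Let psi_check L := psiN (N L) (nceval eta (fun i => ((N L)^-1)%:C *: Xc L i)).
Definition hat_check_dist L := \sum_i opnorm (Xhat L (o i) - Xc L i).
Let M := 1 + \sum_i opnorm (o i).
Let K := \sum_(t <- eta) `|t.1| * (size t.2)%:R * M ^+ size t.2.

Lemma psiN_hat_check_le L : (r <= L.+1)%N -> hat_check_dist L <= 1 ->
  `|psi_hat L - psi_check L| <= K * hat_check_dist L.
Proof.
move=> r_le dist_le1.
have N_ge1 : 1 <= N L by rewrite /N /Nsites ler1n expn_gt0.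
have N_gt0 : 0 < N L by apply: lt_le_trans N_ge1.
have n_gt0 : (0 < hdim nu L.+1 d)%N by rewrite /hdim card_ffun card_ord expn_gt0 d_gt0.
have o_le i : opnorm (o i) <= \sum_i opnorm (o i).
  by rewrite (bigD1 i) //= lerDl sumr_ge0 // => k _; apply: opnorm_ge0.
have dist_le i : opnorm (Xhat L (o i) - Xc L i) <= hat_check_dist L.
  by rewrite /hat_check_dist (bigD1 i) //= lerDl sumr_ge0 // => k _; apply: opnorm_ge0.
set a := fun i => ((N L)^-1)%:C *: Xhat L (o i).
set b := fun i => ((N L)^-1)%:C *: Xc L i.
have a_le i : opnorm (a i) <= opnorm (o i).
  apply: le_trans (opnorm_scale_inv_le _ N_gt0) _.
  by rewrite ler_pdivrMl // opnorm_Xhat_le.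
have ab_le i : opnorm (a i - b i) <= hat_check_dist L.
  rewrite /a /b -scalerBr; apply: le_trans (opnorm_scale_inv_le _ N_gt0) _.
  apply: le_trans (dist_le i); rewrite ler_pdivrMl // ler_peMl ?opnorm_ge0 //.
have b_le i : opnorm (b i) <= M.
  rewrite -[b i](subKr (a i)); apply: le_trans (opnormD _ _) _.
  rewrite opnormN /M addrC; apply: lerD; last by apply: le_trans (o_le i).
  exact: le_trans (ab_le i) dist_le1.
apply: le_trans (psiN_lipschitz n_gt0 N_gt0 (sa_eta_hat r_le) _) _.
  apply: selfadj_nceval => [i | i k]; first exact: selfadjZ.
  by rewrite -!scalemxAl -!scalemxAr Xc_comm.
apply: opnorm_ncevalB_le b_le ab_le.
  by rewrite /M lerDl sumr_ge0 // => i _; apply: opnorm_ge0.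
by move=> i; apply: le_trans (a_le i) _; rewrite /M (le_trans (o_le i)) // lerDr.
Qed.

End HatCheck.

Theorem theorem1 (R : realType) (nu d r m : nat) (Hnu : (0 < nu)%N) (Hd : (0 < d)%N)
  (o : 'I_m -> 'M[R[i]]_(bdim nu r d))
  (Ho : forall i, selfadj (o i))
  (Xc : forall L : nat, 'I_m -> 'M[R[i]]_(hdim nu L.+1 d))
  (HXc_sa : forall L i, selfadj (Xc L i))
  (HXc_comm : forall L i k, Xc L i *m Xc L k = Xc L k *m Xc L i)
  (HXc_norm : forall i,
     (fun L => opnorm (Xhat L (o i) - Xc L i)) @ \oo --> (0 : R))
  (eta : ncpoly R m)
  (Heta : forall L : nat, (r <= L.+1)%N ->
     selfadj (nceval eta (fun i => ((Nsites R nu L)^-1)%:C *: Xhat L (o i))))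
  (lh lc : R)
  (Hh : (fun L => psiN (Nsites R nu L)
           (nceval eta (fun i => ((Nsites R nu L)^-1)%:C *: Xhat L (o i)))) @ \oo --> lh)
  (Hc : (fun L => psiN (Nsites R nu L)
           (nceval eta (fun i => ((Nsites R nu L)^-1)%:C *: Xc L i))) @ \oo --> lc) :
  lh = lc.
Proof.
have dist0 : hat_check_dist o Xc L @[L --> \oo] --> 0.
  rewrite (_ : 0 = \sum_(i < m) 0); last by rewrite big1.
  by apply: cvg_sumr => i; apply: HXc_norm.
apply: (cvg_eq_of_dist_le Hh Hc dist0); near=> L.
apply: psiN_hat_check_le => //; near: L.
- by exists r => // L /= r_le; apply: leqW.
- exact: cvgr_le dist0 1 ltr01.
Unshelve. all: by end_near.
Qed.
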